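(* Let $t\geq 1$ and let $C=\{a_1,\ldots,a_m\}$ be a fan grounded by a curve $\gamma=\gamma_1\cup\cdots\cup\gamma_m$. If each $a_i$ intersects $\gamma$ in at most $t$ points, then there is a subfan $C'=\{a_{i_1},\ldots,a_{i_r}\}\subseteq C$ with $i_1<\cdots<i_r$ and $r=\lfloor\log_{t+1}\log_{t+1}m\rfloor$ that is well-grounded by a subcurve $\gamma'=\gamma'_1\cup\cdots\cup\gamma'_r\subseteq\gamma$, with $\gamma'_j\supseteq\gamma_{i_j}$ for $1\leq j\leq r$.
   Context: All curves are simple; no two curves are tangent (a shared interior point is a proper crossing). A fan with apex $v$ is a collection of curves with common endpoint $v$. Let $\gamma$ be a curve with endpoints $p,q$, partitioned into subcurves $\gamma_1,\ldots,\gamma_m$ appearing in this order along $\gamma$ from $p$ to $q$ (consecutive pieces sharing an endpoint). A fan $C=\{a_1,\ldots,a_m\}$ with apex $v$ is grounded by $\gamma_1\cup\cdots\cup\gamma_m$ if $v\notin\gamma$ and each $a_i$ has its other endpoint on $\gamma_i$. It is well-grounded by $\gamma_1\cup\cdots\cup\gamma_m$ if in addition each $a_i$ intersects $\gamma$ only within $\gamma_i$. *)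

From Stdlib Require Import Reals Lra Lia ZArith List.
Open Scope R_scope.

Definition point : Type := (R * R)%type.

Definition dist2 (p q : point) : R :=
  sqrt ((fst p - fst q) ^ 2 + (snd p - snd q) ^ 2).

(* A curve is given by a parametrization on [0,1]. *)
Definition continuous_on01 (f : R -> point) : Prop :=
  forall x, 0 <= x <= 1 -> forall eps, 0 < eps ->
    exists delta, 0 < delta /\
      forall y, 0 <= y <= 1 -> Rabs (y - x) < delta -> dist2 (f y) (f x) < eps.

Definition simple_curve (f : R -> point) : Prop :=
  continuous_on01 f /\
  (forall x y, 0 <= x <= 1 -> 0 <= y <= 1 -> f x = f y -> x = y).

Definition image_on (f : R -> point) (a b : R) (p : point) : Prop :=
  exists s, a <= s <= b /\ f s = p.

Definition curve_pts (f : R -> point) (p : point) : Prop := image_on f 0 1 p.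

Definition meets_at_most (t : nat) (f g : R -> point) : Prop :=
  exists l : list point, (length l <= t)%nat /\
    forall p, curve_pts f p -> curve_pts g p -> In p l.

(* Subcurves of g: piece i (1 <= i <= m) is g([s (i-1), s i]);
   the whole subcurve is g([s 0, s m]). *)
Definition piece (g : R -> point) (s : nat -> R) (i : nat) : point -> Prop :=
  image_on g (s (i - 1)%nat) (s i).

Definition sub_partition (s : nat -> R) (m : nat) : Prop :=
  0 <= s O /\ s m <= 1 /\ forall i, (1 <= i <= m)%nat -> s (i - 1)%nat < s i.

Definition full_partition (s : nat -> R) (m : nat) : Prop :=
  s O = 0 /\ s m = 1 /\ forall i, (1 <= i <= m)%nat -> s (i - 1)%nat < s i.

Definition is_fan (v : point) (a : nat -> R -> point) (m : nat) : Prop :=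
  forall i, (1 <= i <= m)%nat -> simple_curve (a i) /\ (a i 0 = v \/ a i 1 = v).

Definition grounded (v : point) (a : nat -> R -> point)
    (g : R -> point) (s : nat -> R) (m : nat) : Prop :=
  ~ image_on g (s O) (s m) v /\
  forall i, (1 <= i <= m)%nat ->
    (a i 0 = v /\ piece g s i (a i 1)) \/ (a i 1 = v /\ piece g s i (a i 0)).

Definition well_grounded (v : point) (a : nat -> R -> point)
    (g : R -> point) (s : nat -> R) (m : nat) : Prop :=
  grounded v a g s m /\
  forall i, (1 <= i <= m)%nat -> forall p,
    curve_pts (a i) p -> image_on g (s O) (s m) p -> piece g s i p.

Definition logb (b x : R) : R := ln x / ln b.

From Stdlib Require Import Reals ZArith List Lra Lia Classical.
Open Scope R_scope.

(* Write b = t + 1.  The value r = floor(log_b log_b m) guarantees r^b <= m, so the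
   indices 0 .. r^b - 1 (curve a_(n+1) for index n) form a complete r-ary tree of
   depth b: a block of level k is a run of r^k consecutive indices and splits into
   r child blocks of level k - 1.  Cutting the partition of g at block boundaries,
   every block spans a subcurve of g.  Curve a_(n+1) "escapes at level k" if it
   meets g inside the span of its level-k block but outside the span of its
   level-(k-1) block.  Descending the tree from the root, either
   - some block of level L >= 1 has, in each of its r children, a curve that does
     not escape at level L; these r curves are then well-grounded by the span of
     that block, cut at the boundaries of its children; or
   - a single curve escapes at every level 1 .. b; its escape points are distinct
     because the spans are nested, so it meets g in b = t + 1 points: impossible. *)

Lemma pow_le_of_le_logb (b x : R) (k : nat) :
  1 < b -> 0 < x -> INR k <= logb b x -> b ^ k <= x.
Proof.
  intros hb hx hk.
  assert (hlnb : 0 < ln b) by (rewrite <- ln_1; apply ln_increasing; lra).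
  assert (hln : ln (b ^ k) <= ln x).
  { rewrite ln_pow by lra. unfold logb in hk.
    apply (Rmult_le_compat_r (ln b)) in hk; [|lra].
    replace (ln x / ln b * ln b) with (ln x) in hk by (field; lra). exact hk. }
  destruct (Rle_or_lt (b ^ k) x) as [hle | hlt]; [exact hle |].
  pose proof (ln_increasing x (b ^ k) hx hlt). lra.
Qed.

(* Stdlib's ln vanishes on nonpositive reals, so a positive logarithm forces a
   positive argument. *)
Lemma pos_of_logb_pos (b x : R) : 0 < logb b x -> 0 < x.
Proof.
  intros hl. destruct (Rlt_dec 0 x) as [hx | hx]; [exact hx |].
  exfalso. unfold logb, ln at 1 in hl. destruct (Rlt_dec 0 x); [contradiction |].
  unfold Rdiv in hl. lra.
Qed.

Lemma mul_le_pow (b r : nat) : (2 <= b)%nat -> (r * b <= b ^ r)%nat.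
Proof.
  intros hb. induction r as [|r IH]; [simpl; lia |].
  destruct r as [|r]; [simpl; lia |].
  rewrite Nat.pow_succ_r'. nia.
Qed.

(* r^b <= (b^r)^b = b^(r b) <= b^(b^r). *)
Lemma pow_le_tower (b r : nat) : (2 <= b)%nat -> (r ^ b <= b ^ (b ^ r))%nat.
Proof.
  intros hb.
  assert (hr : (r <= b ^ r)%nat).
  { pose proof (Nat.pow_gt_lin_r b r ltac:(lia)). lia. }
  apply Nat.le_trans with ((b ^ r) ^ b)%nat; [apply Nat.pow_le_mono_l; exact hr |].
  rewrite <- Nat.pow_mul_r. apply Nat.pow_le_mono_r; [lia |].
  pose proof (mul_le_pow b r hb). lia.
Qed.

(* With r = floor(log_b log_b m) we have b^(b^r) <= m, hence r^b <= m: an r-ary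
   tree of depth b fits into the m indices. *)
Lemma tree_fits (b m r : nat) : (2 <= b)%nat ->
  Z.of_nat r = Int_part (logb (INR b) (logb (INR b) (INR m))) -> (r ^ b <= m)%nat.
Proof.
  intros hb hr.
  destruct r as [|r']; [rewrite Nat.pow_0_l by lia; lia |].
  set (r := S r') in *.
  assert (hB : 1 < INR b) by (apply lt_1_INR; lia).
  assert (hrlog : INR r <= logb (INR b) (logb (INR b) (INR m))).
  { rewrite INR_IZR_INZ, hr. apply base_Int_part. }
  assert (hr1 : 1 <= INR r) by (apply (le_INR 1); unfold r; lia).
  assert (hy : 0 < logb (INR b) (INR m)) by (apply (pos_of_logb_pos (INR b)); lra).
  assert (hbr : INR b ^ r <= logb (INR b) (INR m)) by (apply pow_le_of_le_logb; auto).
  assert (hm : 0 < INR m).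
  { apply (pos_of_logb_pos (INR b)). pose proof (pow_lt (INR b) r ltac:(lra)). lra. }
  assert (htower : INR b ^ (b ^ r) <= INR m).
  { apply pow_le_of_le_logb; auto. rewrite pow_INR. exact hbr. }
  rewrite <- pow_INR in htower. apply INR_le in htower.
  pose proof (pow_le_tower b r hb). lia.
Qed.

Definition in_block (r k q n : nat) : Prop := (q * r ^ k <= n < (q + 1) * r ^ k)%nat.

Lemma lt_of_mul_bounds (P a b n : nat) : (a * P <= n < b * P)%nat -> (a < b)%nat.
Proof.
  intros [hlo hhi]. destruct (Nat.lt_ge_cases a b) as [hlt | hge]; [exact hlt |].
  pose proof (Nat.mul_le_mono_r b a P hge). lia.
Qed.

Lemma in_block_unique (r k q1 q2 n : nat) :
  in_block r k q1 n -> in_block r k q2 n -> q1 = q2.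
Proof.
  unfold in_block; intros h1 h2.
  pose proof (lt_of_mul_bounds (r ^ k) q1 (q2 + 1) n ltac:(lia)).
  pose proof (lt_of_mul_bounds (r ^ k) q2 (q1 + 1) n ltac:(lia)). lia.
Qed.

Lemma in_block_nest (r k q q' n : nat) :
  in_block r (S k) q n -> in_block r k q' n ->
  (q * r ^ S k <= q' * r ^ k /\ (q' + 1) * r ^ k <= (q + 1) * r ^ S k)%nat.
Proof.
  unfold in_block. rewrite Nat.pow_succ_r'. intros h1 h2.
  pose proof (lt_of_mul_bounds (r ^ k) (q * r) (q' + 1) n ltac:(nia)).
  pose proof (lt_of_mul_bounds (r ^ k) q' ((q + 1) * r) n ltac:(nia)).
  split; nia.
Qed.

Definition good_block (B : nat -> nat -> Prop) (r m L q : nat) : Prop :=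
  (1 <= L)%nat /\ ((q + 1) * r ^ L <= m)%nat /\
  forall c, (c < r)%nat -> exists n, in_block r (L - 1) (q * r + c) n /\ ~ B n L.

Lemma tree_descent (B : nat -> nat -> Prop) (r m : nat) :
  forall k q, ((q + 1) * r ^ k <= m)%nat ->
  (exists L q', good_block B r m L q') \/
  (exists n, in_block r k q n /\ forall j, (1 <= j <= k)%nat -> B n j).
Proof.
  induction k as [|k IH]; intros q hq.
  - right. exists q. split; [unfold in_block; simpl; lia | intros j hj; lia].
  - destruct (classic (forall c, (c < r)%nat ->
                exists n, in_block r k (q * r + c) n /\ ~ B n (S k))) as [hgood | hbad].
    + left. exists (S k), q. split; [lia |]. split; [exact hq |].
      rewrite Nat.sub_1_r. exact hgood.
    + apply not_all_ex_not in hbad as [c hc]. apply imply_to_and in hc as [hcr hc].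
      assert (hchild : ((q * r + c + 1) * r ^ k <= m)%nat)
        by (rewrite Nat.pow_succ_r' in hq; nia).
      destruct (IH _ hchild) as [hfound | [n [hn hesc]]]; [left; exact hfound |].
      right. exists n. split.
      * unfold in_block in *. rewrite Nat.pow_succ_r'. nia.
      * intros j hj. destruct (Nat.eq_dec j (S k)) as [-> | hjk]; [| apply hesc; lia].
        apply NNPP. intro hnot. apply hc. exists n. split; assumption.
Qed.

Lemma finite_choice (P : nat -> nat -> Prop) (n : nat) :
  (forall c, (c < n)%nat -> exists x, P c x) ->
  exists f, forall c, (c < n)%nat -> P c (f c).
Proof.
  induction n as [|n IH]; intros H.
  - exists (fun _ => O). intros c hc; lia.
  - destruct IH as [f hf]; [intros c hc; apply H; lia |].
    destruct (H n ltac:(lia)) as [x hx].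
    exists (fun c => if Nat.eqb c n then x else f c). intros c hc.
    destruct (Nat.eqb_spec c n) as [-> | hne]; [exact hx | apply hf; lia].
Qed.

Section Escapes.

Variables (a : nat -> R -> point) (g : R -> point) (w : nat -> R).

Definition block_span (r k q : nat) (y : R) : Prop :=
  w (q * r ^ k) <= y <= w ((q + 1) * r ^ k).

Definition escapes (r n k : nat) : Prop :=
  exists q q' y, in_block r k q n /\ in_block r (k - 1) q' n /\ 0 <= y <= 1 /\
    block_span r k q y /\ ~ block_span r (k - 1) q' y /\ curve_pts (a (S n)) (g y).

Lemma not_escapes_confined (r n k q q' : nat) (y : R) :
  in_block r (S k) q n -> in_block r k q' n -> ~ escapes r n (S k) ->
  0 <= y <= 1 -> curve_pts (a (S n)) (g y) ->
  block_span r (S k) q y -> block_span r k q' y.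
Proof.
  intros hq hq' hnot hy hcurve hspan.
  apply NNPP. intro hout. apply hnot. exists q, q', y.
  rewrite Nat.sub_1_r. simpl. auto 7.
Qed.

Hypothesis w_mono : forall i j, (i <= j)%nat -> w i <= w j.
Hypothesis g_inj : forall x y, 0 <= x <= 1 -> 0 <= y <= 1 -> g x = g y -> x = y.

(* A curve escaping at levels 1 .. k meets g in k distinct points, all inside the
   span of its level-k block: the escape point of level j lies outside the span of
   level j - 1, which contains all earlier escape points. *)
Lemma escape_points (r n : nat) : forall k,
  (forall j, (1 <= j <= k)%nat -> escapes r n j) ->
  exists l : list point, length l = k /\ NoDup l /\
    forall p, In p l -> exists y, p = g y /\ 0 <= y <= 1 /\
      curve_pts (a (S n)) (g y) /\ forall q, in_block r k q n -> block_span r k q y.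
Proof.
  induction k as [|k IH]; intros hesc.
  - exists nil. repeat split; [constructor | intros p []].
  - destruct IH as [l [hlen [hnodup hl]]]; [intros j hj; apply hesc; lia |].
    destruct (hesc (S k) ltac:(lia)) as [q [q' [y [hq [hq' [hy [hin [hout hcurve]]]]]]]].
    rewrite Nat.sub_1_r in hq', hout. simpl in hq', hout.
    destruct (in_block_nest r k q q' n hq hq') as [hlo hhi].
    exists (g y :: l). split; [simpl; lia |]. split.
    + constructor; [| exact hnodup]. intro hmem.
      destruct (hl _ hmem) as [y' [hgy [hy' [_ hspan]]]].
      apply g_inj in hgy; [subst y' | exact hy | exact hy'].
      exact (hout (hspan q' hq')).
    + intros p [<- | hmem].
      * exists y. split; [reflexivity |]. split; [exact hy |]. split; [exact hcurve |].
        intros q0 hq0. rewrite (in_block_unique r (S k) q0 q n hq0 hq). exact hin.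
      * destruct (hl _ hmem) as [y' [-> [hy' [hcurve' hspan]]]].
        exists y'. split; [reflexivity |]. split; [exact hy' |]. split; [exact hcurve' |].
        intros q0 hq0. rewrite (in_block_unique r (S k) q0 q n hq0 hq).
        specialize (hspan q' hq'). unfold block_span in *.
        pose proof (w_mono _ _ hlo). pose proof (w_mono _ _ hhi). lra.
Qed.

Lemma escapes_bounded (r n t : nat) : meets_at_most t (a (S n)) g ->
  ~ (forall j, (1 <= j <= S t)%nat -> escapes r n j).
Proof.
  intros [l [hlen hl]] hesc.
  destruct (escape_points r n (S t) hesc) as [pts [hpts [hnodup hmem]]].
  assert (hincl : incl pts l).
  { intros p hp. destruct (hmem p hp) as [y [-> [hy [hcurve _]]]].
    apply hl; [exact hcurve | exists y; split; auto]. }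
  pose proof (NoDup_incl_length hnodup hincl). lia.
Qed.

End Escapes.

Lemma partition_le (s : nat -> R) (m : nat) : full_partition s m ->
  forall i j, (i <= j <= m)%nat -> s i <= s j.
Proof.
  intros [_ [_ hinc]] i j. induction j as [|j IH]; intros hij.
  - replace i with O by lia. lra.
  - destruct (Nat.eq_dec i (S j)) as [-> | hne]; [lra |].
    pose proof (hinc (S j) ltac:(lia)) as hstep. rewrite Nat.sub_1_r in hstep.
    specialize (IH ltac:(lia)). simpl in hstep. lra.
Qed.

Lemma partition_lt (s : nat -> R) (m : nat) : full_partition s m ->
  forall i j, (i < j <= m)%nat -> s i < s j.
Proof.
  intros hs i j hij. pose proof hs as [_ [_ hinc]].
  pose proof (hinc j ltac:(lia)). pose proof (partition_le s m hs i (j - 1) ltac:(lia)). lra.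
Qed.

Definition extend_partition (s : nat -> R) (m i : nat) : R := s (Nat.min i m).

Lemma extend_partition_mono (s : nat -> R) (m : nat) : full_partition s m ->
  forall i j, (i <= j)%nat -> extend_partition s m i <= extend_partition s m j.
Proof. intros hs i j hij. apply (partition_le s m hs). lia. Qed.

Lemma extend_partition_eq (s : nat -> R) (m i : nat) : (i <= m)%nat ->
  extend_partition s m i = s i.
Proof. intros hi. unfold extend_partition. rewrite Nat.min_l; auto. Qed.

Lemma image_on_mono (g : R -> point) (x y x' y' : R) (p : point) :
  x' <= x -> y <= y' -> image_on g x y p -> image_on g x' y' p.
Proof. intros hx hy [z [hz hp]]. exists z. split; [lra | exact hp]. Qed.

Definition subfan_extracted (v : point) (a : nat -> R -> point) (g : R -> point)
    (s : nat -> R) (m r : nat) (idx : nat -> nat) (u : nat -> R) : Prop :=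
  (forall j, (1 <= j <= r)%nat -> (1 <= idx j <= m)%nat) /\
  (forall j, (1 <= j < r)%nat -> (idx j < idx (S j))%nat) /\
  sub_partition u r /\
  (forall j, (1 <= j <= r)%nat ->
     forall p, piece g s (idx j) p -> piece g u j p) /\
  well_grounded v (fun j => a (idx j)) g u r.

Section GridExtraction.

Variables (v : point) (a : nat -> R -> point) (g : R -> point) (s : nat -> R) (m : nat).
Hypothesis hs : full_partition s m.
Hypothesis hgr : grounded v a g s m.

Variables (r P base : nat) (f : nat -> nat).
Hypothesis h_fits : (base + r * P <= m)%nat.
Hypothesis hf_run : forall c, (c < r)%nat -> (base + c * P <= f c < base + (c + 1) * P)%nat.
Hypothesis hf_confined : forall c, (c < r)%nat -> forall y, 0 <= y <= 1 ->
  curve_pts (a (S (f c))) (g y) -> s base <= y <= s (base + r * P) ->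
  s (base + c * P) <= y <= s (base + (c + 1) * P).

Definition grid_cut (j : nat) : R := s (base + j * P).
Definition grid_index (j : nat) : nat := S (f (j - 1)).

Lemma grid_run (j : nat) : (1 <= j <= r)%nat ->
  (base + (j - 1) * P <= f (j - 1) < base + j * P /\ base + j * P <= m)%nat.
Proof.
  intros hj. pose proof (hf_run (j - 1) ltac:(lia)).
  replace (j - 1 + 1)%nat with j in * by lia. nia.
Qed.

Lemma grid_index_range (j : nat) : (1 <= j <= r)%nat -> (1 <= grid_index j <= m)%nat.
Proof. intros hj. pose proof (grid_run j hj). unfold grid_index. lia. Qed.

Lemma grid_index_increasing (j : nat) : (1 <= j < r)%nat ->
  (grid_index j < grid_index (S j))%nat.
Proof.
  intros hj. pose proof (grid_run j ltac:(lia)). pose proof (grid_run (S j) ltac:(lia)).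
  unfold grid_index. replace (S j - 1)%nat with j in * by lia. lia.
Qed.

Lemma grid_cut_partition : sub_partition grid_cut r.
Proof.
  pose proof hs as [hs0 [hsm _]]. unfold grid_cut. split; [| split].
  - rewrite <- hs0. apply (partition_le s m hs). lia.
  - rewrite <- hsm. apply (partition_le s m hs). lia.
  - intros i hi. pose proof (grid_run i hi). apply (partition_lt s m hs). lia.
Qed.

Lemma grid_piece_incl (j : nat) : (1 <= j <= r)%nat ->
  forall p, piece g s (grid_index j) p -> piece g grid_cut j p.
Proof.
  intros hj p. pose proof (grid_run j hj). unfold piece, grid_index, grid_cut.
  rewrite Nat.sub_1_r. simpl. apply image_on_mono; apply (partition_le s m hs); lia.
Qed.

(* Confinement to the runs is exactly well-groundedness. *)
Lemma grid_well_grounded : well_grounded v (fun j => a (grid_index j)) g grid_cut r.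
Proof.
  pose proof hs as [hs0 [hsm _]]. pose proof grid_cut_partition as [hu0 [hur _]].
  destruct hgr as [hv hends]. split; [split |].
  - intro hvu. apply hv. revert hvu. rewrite hs0, hsm. apply image_on_mono; lra.
  - intros i hi. destruct (hends (grid_index i) (grid_index_range i hi)) as [[he hp] | [he hp]].
    + left. split; [exact he | exact (grid_piece_incl i hi _ hp)].
    + right. split; [exact he | exact (grid_piece_incl i hi _ hp)].
  - intros j hj p hcurve [y [hy <-]]. exists y. split; [| reflexivity].
    unfold grid_cut in hy, hu0, hur. rewrite Nat.mul_0_l, Nat.add_0_r in hy, hu0.
    pose proof (hf_confined (j - 1) ltac:(lia) y ltac:(lra) hcurve hy) as hconf.
    unfold grid_cut. replace (j - 1 + 1)%nat with j in hconf by lia. exact hconf.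
Qed.

Lemma grid_subfan : exists idx u, subfan_extracted v a g s m r idx u.
Proof.
  exists grid_index, grid_cut. split; [exact grid_index_range |].
  split; [exact grid_index_increasing |]. split; [exact grid_cut_partition |].
  split; [exact grid_piece_incl | exact grid_well_grounded].
Qed.

End GridExtraction.

(* A good block for escapes yields the grid: its children are the runs, with
   P = r^(L-1), and non-escaping curves are confined to their child's span. *)
Lemma good_block_subfan (v : point) (a : nat -> R -> point) (g : R -> point)
    (s : nat -> R) (m r L q : nat) :
  full_partition s m -> grounded v a g s m ->
  good_block (escapes a g (extend_partition s m) r) r m L q ->
  exists idx u, subfan_extracted v a g s m r idx u.
Proof.
  intros hs hgr [hL [hfit hgood]].
  destruct L as [|L]; [lia |]. rewrite Nat.sub_1_r in hgood. simpl in hgood.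
  destruct (finite_choice _ r hgood) as [f hf].
  set (P := (r ^ L)%nat) in *. set (base := (q * r * P)%nat).
  assert (hlo : (q * r ^ S L = base)%nat) by (unfold base, P; rewrite Nat.pow_succ_r'; lia).
  assert (hhi : ((q + 1) * r ^ S L = base + r * P)%nat)
    by (unfold base, P; rewrite Nat.pow_succ_r'; lia).
  assert (hchild : forall c, ((q * r + c) * P = base + c * P /\
                              (q * r + c + 1) * P = base + (c + 1) * P)%nat)
    by (intro c; unfold base; split; lia).
  assert (hrun : forall c, (c < r)%nat -> (base + c * P <= f c < base + (c + 1) * P)%nat).
  { intros c hc. destruct (hf c hc) as [hin _]. unfold in_block in hin.
    destruct (hchild c) as [e1 e2]. lia. }
  rewrite hhi in hfit.
  apply (grid_subfan v a g s m hs hgr r P base f hfit hrun).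
  intros c hc y hy hcurve hspan.
  destruct (hf c hc) as [hin hnot].
  assert (hparent : in_block r (S L) q (f c)).
  { unfold in_block. rewrite hlo, hhi. pose proof (hrun c hc). nia. }
  pose proof (not_escapes_confined a g (extend_partition s m) r (f c) L q (q * r + c) y
                hparent hin hnot hy hcurve) as hconf.
  unfold block_span in hconf. destruct (hchild c) as [e1 e2]. fold P in hconf.
  rewrite hlo, hhi, e1, e2 in hconf.
  rewrite !extend_partition_eq in hconf by nia. apply hconf. exact hspan.
Qed.

Theorem mainTheorem6
  (t m : nat) (ht : (1 <= t)%nat)
  (v : point) (a : nat -> R -> point) (g : R -> point) (s : nat -> R)
  (hg : simple_curve g)
  (hs : full_partition s m)
  (hfan : is_fan v a m)
  (hgr : grounded v a g s m)
  (hmeet : forall i, (1 <= i <= m)%nat -> meets_at_most t (a i) g)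
  (r : nat)
  (hr : Z.of_nat r =
        Int_part (logb (INR (t + 1)) (logb (INR (t + 1)) (INR m)))) :
  exists (idx : nat -> nat) (u : nat -> R),
    (forall j, (1 <= j <= r)%nat -> (1 <= idx j <= m)%nat) /\
    (forall j, (1 <= j < r)%nat -> (idx j < idx (S j))%nat) /\
    sub_partition u r /\
    (forall j, (1 <= j <= r)%nat ->
       forall p, piece g s (idx j) p -> piece g u j p) /\
    well_grounded v (fun j => a (idx j)) g u r.
Proof.
  pose proof (tree_fits (t + 1) m r ltac:(lia) hr) as hfit.
  destruct (tree_descent (escapes a g (extend_partition s m) r) r m (t + 1) 0 ltac:(lia))
    as [[L [q hgood]] | [n [hn hesc]]].
  - exact (good_block_subfan v a g s m r L q hs hgr hgood).
  - exfalso. destruct hg as [_ hinj]. unfold in_block in hn.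
    apply (escapes_bounded a g (extend_partition s m) (extend_partition_mono s m hs) hinj r n t).
    + apply hmeet. lia.
    + intros j hj. apply hesc. lia.
Qed.
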